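(* Let $g\ge0$, $n\ge1$, $G\in\mathbb{G}_{g,n}$, and let $T_1,\dots,T_k$ be rational tails of $G$. If $H$ is a connected vertex-induced subgraph of $G$ with $V(H)\subseteq\bigcup_{i=1}^kV(T_i)$, then either $H\subseteq T_i$ for some $i$, or $V(G)=V(T_\ell)\cup V(T_r)$ for some $\ell,r$.
   Context: $\mathbb{G}_{g,n}$ is the set of isomorphism classes of dual graphs of stable $n$-pointed curves of genus $g$: connected graphs with vertex genera and $n$ labelled legs, of total genus $g$, each vertex stable. A vertex-induced subgraph is determined by a vertex set and contains all edges with both ends in that set and all legs rooted there. A tail is a connected vertex-induced subgraph joined to its complement by exactly one edge; a rational tail is a tail of genus $0$ (a tree all of whose vertices have genus $0$). *)

From mathcomp Require Import all_boot.
Set Implicit Arguments. Unset Strict Implicit. Unset Printing Implicit Defensive.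

(* A dual graph of an n-pointed curve, represented concretely:
   - V : finite type of vertices, E : finite type of edges;
   - gen v : genus of vertex v;
   - ends e : the two endpoints of edge e (loops allowed: ends e = (v,v);
     multiple edges allowed);
   - leg i : the vertex at which the leg labelled i (i < n) is rooted.
   An isomorphism class in G_{g,n} is represented by any of its members;
   all notions below are isomorphism invariant. *)

Section StableGraphs.
Variables (n : nat) (V E : finType).
Variables (gen : V -> nat) (ends : E -> V * V) (leg : 'I_n -> V).

Definition edge_in (S : {set V}) (e : E) : bool :=
  ((ends e).1 \in S) && ((ends e).2 \in S).

Definition adj_in (S : {set V}) : rel V :=
  fun x y => [&& x \in S, y \in S &
    [exists e : E, (ends e == (x, y)) || (ends e == (y, x))]].

Definition connected_in (S : {set V}) : bool :=
  (S != set0) && [forall x in S, forall y in S, connect (adj_in S) x y].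

Definition nedges_in (S : {set V}) : nat := #|[set e : E | edge_in S e]|.

(* genus of a connected vertex-induced subgraph:
   sum of vertex genera + first Betti number (|E(S)| - |S| + 1) *)
Definition genus_in (S : {set V}) : nat :=
  \sum_(v in S) gen v + (nedges_in S + 1 - #|S|).

(* valence of v: half-edges at v (a loop counts twice) plus legs at v *)
Definition valence (v : V) : nat :=
  #|[set e : E | (ends e).1 == v]| + #|[set e : E | (ends e).2 == v]|
  + #|[set i : 'I_n | leg i == v]|.

Definition stable_graph (g : nat) : Prop :=
  [/\ connected_in [set: V],
      forall v : V, 2 < 2 * gen v + valence v
    & genus_in [set: V] = g].

Definition boundary_edges (S : {set V}) : {set E} :=
  [set e : E | ((ends e).1 \in S) != ((ends e).2 \in S)].

Definition is_tail (S : {set V}) : bool :=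
  connected_in S && (#|boundary_edges S| == 1).

Definition rational_tail (S : {set V}) : bool :=
  is_tail S && (genus_in S == 0).

End StableGraphs.

(* Only the tail property of the T_i matters.  Among the tails meeting H choose
   one, T_a, of maximal size.  If H is not inside T_a, then H contains the
   unique edge e leaving T_a, and the outer end of e lies in some T_b.  By
   maximality T_a is not contained in T_b, so the unique edge leaving T_b also
   has both ends in T_a ∪ T_b: it is e itself, or it is found on a path inside
   T_a from T_a ∩ T_b to T_a \ T_b.  Hence no edge leaves T_a ∪ T_b, and since
   G is connected, T_a ∪ T_b is all of G. *)

From mathcomp Require Import all_boot.
Set Implicit Arguments. Unset Strict Implicit. Unset Printing Implicit Defensive.

Section TailCover.
Variables (V E : finType) (ends : E -> V * V).
Implicit Types (S R A B : {set V}) (e : E).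

Lemma connected_in_connect S x y :
  connected_in ends S -> x \in S -> y \in S -> connect (adj_in ends S) x y.
Proof.
by case/andP=> _ /forallP/(_ x)/implyP xS_conn xS yS;
  move/forallP/(_ y)/implyP: (xS_conn xS); apply.
Qed.

Lemma connected_in_boundary_edge S A x y :
  connected_in ends S -> x \in S -> y \in S -> x \in A -> y \notin A ->
  exists2 e, edge_in ends S e & e \in boundary_edges ends A.
Proof.
move=> S_conn xS yS xA yA.
have xy := connected_in_connect S_conn xS yS.
have [e /andP[eS eA] | no_edge] :=
  pickP (fun e => edge_in ends S e && (e \in boundary_edges ends A)); first by exists e.
suff A_closed : closed (adj_in ends S) A by rewrite -(closed_connect A_closed xy) xA in yA.
move=> u w /and3P[uS wS /existsP[e /orP[]/eqP ends_e]];
  move: (no_edge e); rewrite /edge_in inE ends_e /= uS wS /=;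
  by case: (u \in A); case: (w \in A).
Qed.

Lemma boundary_edge_ends A e : e \in boundary_edges ends A ->
  exists x y, [/\ x \in A, y \notin A,
    forall S, edge_in ends S e = (x \in S) && (y \in S)
  & forall S, (e \in boundary_edges ends S) = ((x \in S) != (y \in S))].
Proof.
have e_bd S : (e \in boundary_edges ends S) = (((ends e).1 \in S) != ((ends e).2 \in S)).
  by rewrite inE.
rewrite e_bd /edge_in; move: e_bd; case: (ends e) => u w /= e_bd.
case uA: (u \in A); case wA: (w \in A) => //= _;
  [exists u, w | exists w, u]; split; rewrite ?uA ?wA // => S;
  by [rewrite e_bd // eq_sym | rewrite andbC].
Qed.

Lemma edge_inS S R e : S \subset R -> edge_in ends S e -> edge_in ends R e.
Proof. by move=> /subsetP sSR; rewrite /edge_in => /andP[/sSR -> /sSR ->]. Qed.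

Lemma edge_in_boundary_edges S e :
  edge_in ends S e -> e \notin boundary_edges ends S.
Proof. by rewrite /edge_in inE => /andP[-> ->]. Qed.

Lemma boundary_edgesU A B :
  boundary_edges ends (A :|: B) \subset boundary_edges ends A :|: boundary_edges ends B.
Proof.
apply/subsetP => e; rewrite !inE.
by case: ((ends e).1 \in A); case: ((ends e).1 \in B);
   case: ((ends e).2 \in A); case: ((ends e).2 \in B).
Qed.

Lemma connected_boundary_edges0 S :
  connected_in ends [set: V] -> S != set0 -> boundary_edges ends S = set0 ->
  S = [set: V].
Proof.
move=> G_conn /set0Pn[x xS] bdS0.
apply/setP => y; rewrite inE; apply/negPn/negP => yS.
have [e _] := connected_in_boundary_edge G_conn (in_setT x) (in_setT y) xS yS.
by rewrite bdS0 inE.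
Qed.

Lemma setU_eq_setT_of_boundary_edges_in A B :
  connected_in ends [set: V] -> A != set0 ->
  {in boundary_edges ends A, forall e, edge_in ends (A :|: B) e} ->
  {in boundary_edges ends B, forall e, edge_in ends (A :|: B) e} ->
  A :|: B = [set: V].
Proof.
move=> G_conn A_nz A_in B_in; apply: connected_boundary_edges0 => //.
  by apply: contraNneq A_nz => AB0; rewrite -subset0 -AB0 subsetUl.
apply/setP => e; rewrite in_set0; apply/negbTE/negP => eAB.
have e_in : edge_in ends (A :|: B) e.
  by case/setUP: (subsetP (boundary_edgesU A B) e eAB) => [/A_in|/B_in].
by rewrite (negbTE (edge_in_boundary_edges e_in)) in eAB.
Qed.

Lemma tail_boundary_edges S e :
  is_tail ends S -> e \in boundary_edges ends S -> boundary_edges ends S = [set e].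
Proof. by case/andP=> _ /cards1P[f ->]; rewrite inE => /eqP ->. Qed.

Lemma tail_boundary_edges_in S R e :
  is_tail ends S -> e \in boundary_edges ends S -> edge_in ends R e ->
  {in boundary_edges ends S, forall f, edge_in ends R f}.
Proof.
by move=> S_tail eS eR f; rewrite (tail_boundary_edges S_tail eS) inE => /eqP ->.
Qed.

Lemma tails_setU_eq_setT A B e :
  connected_in ends [set: V] -> is_tail ends A -> is_tail ends B ->
  ~~ (A \subset B) -> e \in boundary_edges ends A -> edge_in ends (A :|: B) e ->
  A :|: B = [set: V].
Proof.
move=> G_conn A_tail B_tail /subsetPn[z zA zB] eA eAB.
have [x [y [xA yA e_in e_bd]]] := boundary_edge_ends eA.
apply: setU_eq_setT_of_boundary_edges_in => //; first by apply/set0Pn; exists z.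
  exact: tail_boundary_edges_in A_tail eA eAB.
have yB : y \in B by move: eAB; rewrite e_in !inE (negbTE yA) => /andP[].
have [eB | eB_not] := boolP (e \in boundary_edges ends B).
  exact: tail_boundary_edges_in B_tail eB eAB.
have xB : x \in B by move: eB_not; rewrite e_bd yB; case: (x \in B).
have A_conn : connected_in ends A by case/andP: A_tail.
have [f fA fB] := connected_in_boundary_edge A_conn xA zA xB zB.
exact: tail_boundary_edges_in B_tail fB (edge_inS (subsetUl A B) fA).
Qed.

End TailCover.

Theorem lemma4p14 (g n : nat) (V E : finType)
    (gen : V -> nat) (ends : E -> V * V) (leg : 'I_n -> V)
    (k : nat) (T : 'I_k -> {set V}) (H : {set V}) :
  1 <= n ->
  stable_graph gen ends leg g ->
  (forall i : 'I_k, rational_tail gen ends (T i)) ->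
  connected_in ends H ->
  H \subset \bigcup_(i < k) T i ->
  (exists i : 'I_k, H \subset T i) \/
  (exists l r : 'I_k, [set: V] = T l :|: T r).
Proof.
move=> _ [G_conn _ _] T_rat H_conn H_cover.
have T_tail i : is_tail ends (T i) by case/andP: (T_rat i).
have /set0Pn[h hH] : H != set0 by case/andP: H_conn.
have /bigcupP[i0 _ hTi0] := subsetP H_cover h hH.
pose meets_H i := [exists v in H, v \in T i].
have meets_i0 : meets_H i0 by apply/exists_inP; exists h.
have [a /exists_inP[x xH xTa] a_max] := arg_maxnP (fun i => #|T i|) meets_i0.
have [|/subsetPn[y yH yTa]] := boolP (H \subset T a); first by left; exists a.
right.
have [e eH eTa] := connected_in_boundary_edge H_conn xH yH xTa yTa.
have [u [w [uTa wTa e_in _]]] := boundary_edge_ends eTa.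
have wH : w \in H by move: eH; rewrite e_in => /andP[].
have /bigcupP[b _ wTb] := subsetP H_cover w wH.
exists a, b; symmetry; apply: tails_setU_eq_setT (T_tail a) (T_tail b) _ eTa _ => //.
  have meets_b : meets_H b by apply/exists_inP; exists w.
  apply: contraL (a_max b meets_b) => Ta_sub_Tb; rewrite -ltnNge.
  by apply: proper_card; rewrite properE Ta_sub_Tb; apply/subsetPn; exists w.
by rewrite e_in !inE uTa wTb orbT.
Qed.
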